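(* Let $(X,|\cdot|)$ be a Euclidean plane and $\|\cdot\|$ a norm on $X$ with $\|\cdot\|\le|\cdot|$. Let $E$ be the unit ball of $|\cdot|$ and $B$ the unit ball of $\|\cdot\|$. Then $E$ is the John ellipse of $B$ if and only if there exist $v_0,v_1,v_2\in X$ with $|v_i|=\|v_i\|=1$ for $i=0,1,2$ and $\langle v_i,v_{i+1}\rangle\ge0$ for $i=0,1,2$, where $v_3:=-v_0$.
   Context: For a compact convex centrally symmetric set $B\subset\mathbb{R}^2$ with the origin in its interior, the John ellipse of $B$ is the unique ellipse of maximal area contained in $B$. $\langle\cdot,\cdot\rangle$ is the inner product inducing $|\cdot|$. *)

From HB Require Import structures.
From mathcomp Require Import all_boot all_order all_algebra.
From mathcomp Require Import reals.
Set Implicit Arguments. Unset Strict Implicit. Unset Printing Implicit Defensive.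
Import Order.TTheory GRing.Theory Num.Theory.
Local Open Scope ring_scope.

(* The Euclidean plane is modelled as R^2 = 'rV[R]_2 with the standard
   inner product. *)
Definition vec (R : realType) := 'rV[R]_2.

Definition inner (R : realType) (u v : vec R) : R := (u *m v^T) 0 0.

Definition enorm (R : realType) (u : vec R) : R := Num.sqrt (inner u u).

Definition is_norm (R : realType) (N : vec R -> R) : Prop :=
  (forall x, N x = 0 -> x = 0) /\
  (forall (a : R) x, N (a *: x) = `|a| * N x) /\
  (forall x y, N (x + y) <= N x + N y).

Definition eball (R : realType) : vec R -> Prop := fun x => enorm x <= 1.
Definition nball (R : realType) (N : vec R -> R) : vec R -> Prop :=
  fun x => N x <= 1.

Definition ellipse_set (R : realType) (A : 'M[R]_2) (c : vec R) : vec R -> Prop :=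
  fun x => exists2 u : vec R, enorm u <= 1 & x = u *m A + c.

(* Area of ellipse_set A c is pi * |det A|; comparing areas therefore
   amounts to comparing |det A|. *)
Definition ellipse_area_cmp (R : realType) (A : 'M[R]_2) : R := `|\det A|.

Definition subset_pred (T : Type) (P Q : T -> Prop) := forall x, P x -> Q x.

Definition is_John_ellipse (R : realType) (B E : vec R -> Prop) : Prop :=
  exists A : 'M[R]_2, exists c : vec R,
    [/\ A \in unitmx,
        (forall x, E x <-> ellipse_set A c x),
        subset_pred E B &
        forall (A' : 'M[R]_2) (c' : vec R), A' \in unitmx ->
          subset_pred (ellipse_set A' c') B ->
          ellipse_area_cmp A' <= ellipse_area_cmp A].

From HB Require Import structures.
From mathcomp Require Import all_boot all_order all_algebra.
From mathcomp Require Import reals.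
From mathcomp Require Import all_classical all_reals all_analysis.
From mathcomp Require Import ring lra.
Set Implicit Arguments. Unset Strict Implicit. Unset Printing Implicit Defensive.
Import Order.TTheory GRing.Theory Num.Theory.
Import numFieldNormedType.Exports.
Local Open Scope ring_scope.

(* Let B be the unit ball of N and call v a contact point when |v| = N v = 1.
   Each contact point v gives a supporting line of B: |<x, v>| <= N x.  An
   ellipse {u A + c} inside B therefore satisfies |v A^T| <= 1 at three contact
   points spanning a half-turn.  On unit vectors |v A^T|^2 is half the trace of
   A A^T plus a traceless quadratic form, and a traceless form cannot be
   negative at three vectors spanning a half-turn; so tr (A A^T) <= 2 and
   |det A| <= 1, i.e. the Euclidean disc is the John ellipse.
   Conversely, if there is no such triple, take the last contact points up and
   um on the two quarter-circles on either side of a contact point v0; then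
   c := <up, um> > 0 and every contact point u with <u, v0> >= 0 satisfies
   <u, up> <u, um> >= c.  The quadratic form 3c/4 |u|^2 - <u, up> <u, um> has
   positive trace and is negative at all contact points, so by compactness of
   the circle, for small e > 0 the ellipse {u (I + e H)} (H its matrix) still
   lies in B, while det (I + e H) = 1 + e tr H + O(e^2) > 1. *)

Section Coordinates.
Variable R : realType.
Implicit Types (u v w x y : vec R) (A : 'M[R]_2).

Lemma big_ord2 (F : 'I_2 -> R) : \sum_(i < 2) F i = F 0 + F 1.
Proof. by rewrite big_ord_recr big_ord1; congr (F _ + F _); apply/val_inj. Qed.

Definition vec2 (a b : R) : vec R := \row_(j < 2) if j == 0 :> nat then a else b.

Lemma vec2_0 a b : vec2 a b 0 0 = a. Proof. by rewrite mxE. Qed.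
Lemma vec2_1 a b : vec2 a b 0 1 = b. Proof. by rewrite mxE. Qed.

Lemma mulmx_coord u A i : (u *m A) 0 i = u 0 0 * A 0 i + u 0 1 * A 1 i.
Proof. by rewrite mxE big_ord2. Qed.

Definition coordE := (vec2_0, vec2_1, mulmx_coord, mxE).

Lemma vec_eq u v : u 0 0 = v 0 0 -> u 0 1 = v 0 1 -> u = v.
Proof.
move=> eq0 eq1; apply/rowP => -[[|[|//]] lt_j2].
- by rewrite (_ : Ordinal lt_j2 = 0) //; apply/val_inj.
- by rewrite (_ : Ordinal lt_j2 = 1) //; apply/val_inj.
Qed.

Lemma vec2E u : vec2 (u 0 0) (u 0 1) = u.
Proof. by apply: vec_eq; rewrite !coordE. Qed.

Lemma det_mx2 A : \det A = A 0 0 * A 1 1 - A 0 1 * A 1 0.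
Proof.
rewrite (expand_det_row _ 0) big_ord2 /cofactor !det_mx11 !mxE /= expr0 expr1.
have -> : lift 0 (0 : 'I_1) = 1 :> 'I_2 by apply/val_inj.
have -> : lift 1 (0 : 'I_1) = 0 :> 'I_2 by apply/val_inj.
by rewrite mul1r mulN1r mulrN.
Qed.

Lemma innerE u v : inner u v = u 0 0 * v 0 0 + u 0 1 * v 0 1.
Proof. by rewrite /inner !mxE big_ord2 !mxE. Qed.

Lemma innerC u v : inner u v = inner v u.
Proof. by rewrite !innerE mulrC [u 0 1 * _]mulrC. Qed.

Lemma innerDl u v w : inner (u + v) w = inner u w + inner v w.
Proof. by rewrite /inner mulmxDl mxE. Qed.

Lemma innerNl u v : inner (- u) v = - inner u v.
Proof. by rewrite /inner mulNmx mxE. Qed.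

Lemma innerNr u v : inner u (- v) = - inner u v.
Proof. by rewrite innerC innerNl innerC. Qed.

Lemma innerZl (a : R) u v : inner (a *: u) v = a * inner u v.
Proof. by rewrite /inner -scalemxAl mxE. Qed.

Lemma inner_mulmxl u v A : inner (u *m A) v = inner u (v *m A^T).
Proof. by rewrite /inner trmx_mul trmxK mulmxA. Qed.

Lemma enorm_ge0 u : 0 <= enorm u. Proof. exact: sqrtr_ge0. Qed.

Lemma enorm_sqr u : enorm u ^+ 2 = u 0 0 ^+ 2 + u 0 1 ^+ 2.
Proof. by rewrite /enorm innerE -!expr2 sqr_sqrtr // addr_ge0 // sqr_ge0. Qed.

Lemma inner_self u : inner u u = enorm u ^+ 2.
Proof. by rewrite enorm_sqr innerE -!expr2. Qed.

Lemma enorm_le1P u : enorm u <= 1 <-> u 0 0 ^+ 2 + u 0 1 ^+ 2 <= 1.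
Proof. by rewrite -enorm_sqr; have := enorm_ge0 u; split => ?; nra. Qed.

Lemma enorm_eq1P u : enorm u = 1 <-> u 0 0 ^+ 2 + u 0 1 ^+ 2 = 1.
Proof.
rewrite -enorm_sqr; split => [-> | u2]; first by rewrite expr1n.
by have := enorm_ge0 u; nra.
Qed.

Lemma enorm_eq0 u : enorm u = 0 -> u = 0.
Proof.
move=> u0; have := enorm_sqr u; rewrite u0 expr0n /= => sq0.
have := sqr_ge0 (u 0 0); have := sqr_ge0 (u 0 1) => ? ?.
by apply: vec_eq; rewrite mxE; nra.
Qed.

Lemma enormN u : enorm (- u) = enorm u.
Proof. by rewrite /enorm innerNl innerNr opprK. Qed.

Lemma enormZ (a : R) u : enorm (a *: u) = `|a| * enorm u.
Proof.
by rewrite /enorm innerZl innerC innerZl mulrA -expr2 sqrtrM ?sqr_ge0 // sqrtr_sqr.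
Qed.

Lemma inner_sqr_le u v : inner u v ^+ 2 <= enorm u ^+ 2 * enorm v ^+ 2.
Proof.
rewrite !enorm_sqr innerE.
by have := sqr_ge0 (u 0 0 * v 0 1 - u 0 1 * v 0 0); nra.
Qed.

Lemma inner_le u v : `|inner u v| <= enorm u * enorm v.
Proof.
rewrite -(ler_pXn2r (n := 2)) ?nnegrE ?mulr_ge0 ?enorm_ge0 //.
by rewrite real_normK ?num_real // exprMn inner_sqr_le.
Qed.

End Coordinates.

Section TracelessForm.
Variable R : realFieldType.

Definition traceless_form (a b x y : R) := a * (x ^+ 2 - y ^+ 2) + 2 * b * x * y.

(* The negative cone of a traceless form is a pair of opposite open
   quarter-turn sectors; if it contains (1, 0), its part in the right
   half-plane is a single such sector. *)
Lemma traceless_form_neg_inner_gt0 (a b x1 y1 x2 y2 : R) : a < 0 ->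
  traceless_form a b x1 y1 < 0 -> traceless_form a b x2 y2 < 0 ->
  0 < x1 -> 0 < x2 -> 0 < x1 * x2 + y1 * y2.
Proof.
move=> a_lt0 q1_lt0 q2_lt0 x1_gt0 x2_gt0.
have cross : (x1 * x2 + y1 * y2) * ((x1 * y2 - x2 * y1) * - a) =
    x1 * y1 * traceless_form a b x2 y2 - x2 * y2 * traceless_form a b x1 y1.
  by rewrite /traceless_form; ring.
move: (traceless_form a b x1 y1) (traceless_form a b x2 y2) cross q1_lt0 q2_lt0.
move=> q1 q2 cross q1_lt0 q2_lt0.
have [y1_ge0|y1_lt0] := leP 0 y1; have [y2_ge0|y2_lt0] := leP 0 y2; try nra.
- have K_lt0 : (x1 * y2 - x2 * y1) * - a < 0.
    by rewrite pmulr_llt0 ?oppr_gt0 //; nra.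
  have t1 : x1 * y1 * q2 <= 0 := mulr_ge0_le0 (mulr_ge0 (ltW x1_gt0) y1_ge0) (ltW q2_lt0).
  have t2 : 0 < x2 * y2 * q1 by rewrite (nmulr_lgt0 _ q1_lt0) pmulr_rlt0.
  by rewrite -(nmulr_llt0 _ K_lt0) cross; lra.
- have K_gt0 : 0 < (x1 * y2 - x2 * y1) * - a.
    by rewrite pmulr_lgt0 ?oppr_gt0 //; nra.
  have t1 : 0 < x1 * y1 * q2 by rewrite (nmulr_lgt0 _ q2_lt0) pmulr_rlt0.
  have t2 : x2 * y2 * q1 <= 0 := mulr_ge0_le0 (mulr_ge0 (ltW x2_gt0) y2_ge0) (ltW q1_lt0).
  by rewrite -(pmulr_lgt0 _ K_gt0) cross; lra.
Qed.

(* The reflection (x, y) |-> (a0 x + b0 y, b0 x - a0 y) maps (a0, b0) to (1, 0). *)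
Lemma traceless_form_reflect (a b a0 b0 x y : R) : a0 ^+ 2 + b0 ^+ 2 = 1 ->
  traceless_form a b x y =
  traceless_form (traceless_form a b a0 b0) (2 * a * a0 * b0 - b * (a0 ^+ 2 - b0 ^+ 2))
    (a0 * x + b0 * y) (b0 * x - a0 * y).
Proof.
move=> unit0; transitivity (traceless_form a b x y * (a0 ^+ 2 + b0 ^+ 2) ^+ 2).
  by rewrite unit0 expr1n mulr1.
by rewrite /traceless_form; ring.
Qed.

Lemma traceless_formN (a b x y : R) :
  traceless_form a b (- x) (- y) = traceless_form a b x y.
Proof. by rewrite /traceless_form; ring. Qed.

Lemma traceless_form_halfturn (a b x0 y0 x1 y1 x2 y2 : R) : x0 ^+ 2 + y0 ^+ 2 = 1 ->
  0 <= x0 * x1 + y0 * y1 -> 0 <= x1 * x2 + y1 * y2 -> x0 * x2 + y0 * y2 <= 0 ->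
  [\/ 0 <= traceless_form a b x0 y0, 0 <= traceless_form a b x1 y1
    | 0 <= traceless_form a b x2 y2].
Proof.
move=> unit0 i01 i12 i02.
have [|q0_lt0] := leP 0 (traceless_form a b x0 y0); first by constructor 1.
have [|q1_lt0] := leP 0 (traceless_form a b x1 y1); first by constructor 2.
have [|q2_lt0] := leP 0 (traceless_form a b x2 y2); first by constructor 3.
exfalso; move: q1_lt0 q2_lt0 i12; rewrite (traceless_form_reflect a b x1 y1 unit0).
rewrite (traceless_form_reflect a b x2 y2 unit0).
have -> : x1 * x2 + y1 * y2 = (x0 * x1 + y0 * y1) * (x0 * x2 + y0 * y2)
    + (y0 * x1 - x0 * y1) * (y0 * x2 - x0 * y2).
  transitivity ((x1 * x2 + y1 * y2) * (x0 ^+ 2 + y0 ^+ 2)); first by rewrite unit0 mulr1.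
  by ring.
move: q0_lt0 i01 i02.
set q0 := traceless_form a b x0 y0; set c := 2 * a * x0 * y0 - b * _.
set X1 := x0 * x1 + y0 * y1; set Y1 := y0 * x1 - x0 * y1.
set X2 := x0 * x2 + y0 * y2; set Y2 := y0 * x2 - x0 * y2.
move=> q0_lt0 X1_ge0 X2_le0 q1_lt0 q2_lt0 i12.
have on_y_axis_ge0 y : 0 <= traceless_form q0 c 0 y.
  have -> : traceless_form q0 c 0 y = - q0 * y ^+ 2 by rewrite /traceless_form; ring.
  by rewrite mulr_ge0 ?oppr_ge0 ?sqr_ge0 ?ltW.
have X1_gt0 : 0 < X1.
  by rewrite lt_neqAle X1_ge0 andbT; apply: contraTneq q1_lt0 => <-; rewrite -leNgt.
have NX2_gt0 : 0 < - X2.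
  rewrite oppr_gt0 lt_neqAle X2_le0 andbT.
  by apply: contraTneq q2_lt0 => ->; rewrite -leNgt.
rewrite -traceless_formN in q2_lt0.
have := traceless_form_neg_inner_gt0 q0_lt0 q1_lt0 q2_lt0 X1_gt0 NX2_gt0.
by rewrite !mulrN -opprD oppr_gt0 ltNge i12.
Qed.

(* On unit vectors, |M x|^2 is half the trace of M^T M plus a traceless form. *)
Lemma halfturn_det_le1 (a b c d x0 y0 x1 y1 x2 y2 : R) :
  x0 ^+ 2 + y0 ^+ 2 = 1 -> x1 ^+ 2 + y1 ^+ 2 = 1 -> x2 ^+ 2 + y2 ^+ 2 = 1 ->
  0 <= x0 * x1 + y0 * y1 -> 0 <= x1 * x2 + y1 * y2 -> x0 * x2 + y0 * y2 <= 0 ->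
  (x0 * a + y0 * b) ^+ 2 + (x0 * c + y0 * d) ^+ 2 <= 1 ->
  (x1 * a + y1 * b) ^+ 2 + (x1 * c + y1 * d) ^+ 2 <= 1 ->
  (x2 * a + y2 * b) ^+ 2 + (x2 * c + y2 * d) ^+ 2 <= 1 ->
  (a * d - b * c) ^+ 2 <= 1.
Proof.
move=> unit0 unit1 unit2 i01 i12 i02 le0 le1 le2.
pose p := a ^+ 2 + c ^+ 2; pose s := b ^+ 2 + d ^+ 2; pose r := a * b + c * d.
have split_trace x y : x ^+ 2 + y ^+ 2 = 1 ->
    (x * a + y * b) ^+ 2 + (x * c + y * d) ^+ 2 =
    (p + s) / 2 + traceless_form ((p - s) / 2) r x y.
  move=> unit; transitivity ((p + s) / 2 * (x ^+ 2 + y ^+ 2)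
    + traceless_form ((p - s) / 2) r x y); last by rewrite unit mulr1.
  by rewrite /traceless_form /p /s /r; field.
have half_trace_le1 : (p + s) / 2 <= 1.
  have [q0|q1|q2] := traceless_form_halfturn ((p - s) / 2) r unit0 i01 i12 i02.
  - by move: le0; rewrite split_trace //; lra.
  - by move: le1; rewrite split_trace //; lra.
  - by move: le2; rewrite split_trace //; lra.
have -> : (a * d - b * c) ^+ 2 = p * s - r ^+ 2 by rewrite /p /s /r; ring.
have p_ge0 : 0 <= p by rewrite /p; nra.
have s_ge0 : 0 <= s by rewrite /s; nra.
have := sqr_ge0 (p - s); have := sqr_ge0 r; nra.
Qed.

End TracelessForm.

Section ContactPoints.
Variable R : realType.
Implicit Types (u v w x : vec R).
Variable N : vec R -> R.
Hypothesis normN : is_norm N.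

Lemma is_normZ (a : R) x : N (a *: x) = `|a| * N x. Proof. by case: normN => _ []. Qed.
Lemma is_normD x y : N (x + y) <= N x + N y. Proof. by case: normN => _ []. Qed.

Lemma is_norm0 : N 0 = 0.
Proof. by rewrite -(scale0r (0 : vec R)) is_normZ normr0 mul0r. Qed.

Lemma is_normN x : N (- x) = N x.
Proof. by rewrite -scaleN1r is_normZ normrN normr1 mul1r. Qed.

Lemma is_norm_ge0 x : 0 <= N x.
Proof. by have := is_normD x (- x); rewrite subrr is_norm0 is_normN; lra. Qed.

Hypothesis N_le_enorm : forall x, N x <= enorm x.

Lemma is_norm_lipschitz u w : `|N u - N w| <= enorm (u - w).
Proof.
apply: le_trans (N_le_enorm (u - w)); rewrite ler_norml.
have := is_normD (u - w) w; have := is_normD (w - u) u.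
by rewrite !subrK -opprB is_normN; lra.
Qed.

(* A contact point v is a support direction of the unit ball of N: moving from
   v towards x at speed s raises N at rate [inner x v - N x] while |.| grows
   only at order s^2. *)
Lemma contact_support v x : enorm v = 1 -> N v = 1 -> inner x v <= N x.
Proof.
move=> v_unit Nv1; set a := inner x v.
rewrite leNgt; apply/negP => Nx_lt_a.
set d := a - N x; set k := enorm x ^+ 2 - a ^+ 2.
have d_gt0 : 0 < d by rewrite subr_gt0.
have k_ge0 : 0 <= k.
  by rewrite subr_ge0 -[enorm x ^+ 2]mulr1 -(expr1n _ 2) -v_unit inner_sqr_le.
suff le_sk s : 0 < s -> 2 * d <= s * k.
  have k1_gt0 : 0 < k + 1 by lra.
  have s_gt0 : 0 < d / (k + 1) by rewrite divr_gt0.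
  have := divfK (lt0r_neq0 k1_gt0) d; rewrite mulrDr mulr1.
  by have := le_sk _ s_gt0; lra.
move=> s_gt0; set w := (1 + s * a) *: v - s *: x.
have Nw : 1 + s * d <= N w.
  have : N ((1 + s * a) *: v) <= N (s *: x) + N w.
    by rewrite -[X in N X](addrNK (s *: x)) addrC is_normD.
  have sa_ge0 : 0 <= s * a by rewrite mulr_ge0 ?ltW // (le_lt_trans (is_norm_ge0 x)).
  rewrite !is_normZ Nv1 mulr1 (gtr0_norm s_gt0) ger0_norm ?addr_ge0 //.
  by rewrite /d mulrBr; lra.
have enorm_w : enorm w ^+ 2 = 1 + s ^+ 2 * k.
  have v2 : v 0 0 ^+ 2 + v 0 1 ^+ 2 = 1 by apply/enorm_eq1P.
  apply/eqP; rewrite -subr_eq0; apply/eqP.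
  transitivity ((1 + s * a) ^+ 2 * (v 0 0 ^+ 2 + v 0 1 ^+ 2 - 1)).
    by rewrite /w /k /a !enorm_sqr innerE !coordE; ring.
  by rewrite v2 subrr mulr0.
have := N_le_enorm w; have := enorm_ge0 w; have := mulr_gt0 s_gt0 d_gt0; nra.
Qed.

Lemma contact_support_abs v x : enorm v = 1 -> N v = 1 -> `|inner x v| <= N x.
Proof.
move=> v_unit Nv1; rewrite ler_norml contact_support // andbT lerNl.
by rewrite -is_normN -innerNl contact_support.
Qed.

End ContactPoints.

Section InscribedEllipses.
Variable R : realType.
Implicit Types (u v x : vec R) (A : 'M[R]_2) (S : vec R -> Prop).

Lemma ellipse_width_le1 S A c v : subset_pred (ellipse_set A c) S ->
  (forall x, S x -> `|inner x v| <= 1) -> enorm (v *m A^T) <= 1.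
Proof.
move=> sub_AS slab; set w := v *m A^T; set m := enorm w.
have [->|m_neq0] := eqVneq m 0; first exact: ler01.
have m_gt0 : 0 < m by rewrite lt_neqAle eq_sym m_neq0 enorm_ge0.
set u := m^-1 *: w.
have u_unit : enorm u = 1 by rewrite enormZ ger0_norm ?invr_ge0 ?ltW // mulVf.
have in_slab u' : enorm u' <= 1 -> `|inner u' w + inner c v| <= 1.
  by move=> u'_le1; rewrite -inner_mulmxl -innerDl; apply/slab/sub_AS; exists u'.
have inner_uw : inner u w = m by rewrite innerZl inner_self -/m expr2 mulKf.
have := in_slab u; have := in_slab (- u).
rewrite enormN u_unit innerNl inner_uw lexx => /(_ isT) + /(_ isT).
by rewrite !ler_norml; lra.
Qed.

Lemma halfturn_ellipse_det_le1 S v0 v1 v2 :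
  enorm v0 = 1 -> enorm v1 = 1 -> enorm v2 = 1 ->
  0 <= inner v0 v1 -> 0 <= inner v1 v2 -> 0 <= inner v2 (- v0) ->
  (forall x, S x -> `|inner x v0| <= 1) ->
  (forall x, S x -> `|inner x v1| <= 1) ->
  (forall x, S x -> `|inner x v2| <= 1) ->
  forall A c, subset_pred (ellipse_set A c) S -> `|\det A| <= 1.
Proof.
move=> /enorm_eq1P unit0 /enorm_eq1P unit1 /enorm_eq1P unit2 i01 i12 i20.
move=> slab0 slab1 slab2 A c sub_AS.
have /enorm_le1P := ellipse_width_le1 sub_AS slab0.
have /enorm_le1P := ellipse_width_le1 sub_AS slab1.
have /enorm_le1P := ellipse_width_le1 sub_AS slab2.
rewrite !coordE => w2 w1 w0.
rewrite innerNr oppr_ge0 innerC in i20; rewrite !innerE in i01 i12 i20.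
rewrite -(@expr_le1 _ 2) // real_normK ?num_real // det_mx2.
exact: halfturn_det_le1 unit0 unit1 unit2 i01 i12 i20 w0 w1 w2.
Qed.

Lemma eball_ellipse x : eball x <-> ellipse_set (1%:M : 'M[R]_2) 0 x.
Proof.
split => [x_le1|[u u_le1 ->]]; first by exists x; rewrite ?mulmx1 ?addr0.
by rewrite /eball mulmx1 addr0.
Qed.

Lemma eball_ellipse_det_le1 A c :
  subset_pred (ellipse_set A c) (@eball R) -> `|\det A| <= 1.
Proof.
move=> sub_AE.
have e1_unit : enorm (vec2 1 0 : vec R) = 1 by apply/enorm_eq1P; rewrite !coordE; lra.
have e2_unit : enorm (vec2 0 1 : vec R) = 1 by apply/enorm_eq1P; rewrite !coordE; lra.
have Ne1_unit : enorm (- vec2 1 0 : vec R) = 1 by rewrite enormN.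
have slab v x : enorm v = 1 -> eball x -> `|inner x v| <= 1.
  by move=> v_unit x_le1; apply: le_trans (inner_le x v) _; rewrite v_unit mulr1.
apply: (halfturn_ellipse_det_le1 e1_unit e2_unit Ne1_unit _ _ _ _ _ _ sub_AE).
- by rewrite innerE !coordE; lra.
- by rewrite innerNr innerE !coordE; lra.
- by rewrite innerNl innerNr opprK innerE !coordE; lra.
all: by move=> x; apply: slab.
Qed.

Lemma contacts_John (N : vec R -> R) v0 v1 v2 : is_norm N ->
  (forall x, N x <= enorm x) ->
  enorm v0 = 1 -> N v0 = 1 -> enorm v1 = 1 -> N v1 = 1 ->
  enorm v2 = 1 -> N v2 = 1 ->
  0 <= inner v0 v1 -> 0 <= inner v1 v2 -> 0 <= inner v2 (- v0) ->
  is_John_ellipse (nball N) (@eball R).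
Proof.
move=> normN N_le e0 n0 e1 n1 e2 n2 i01 i12 i20.
exists 1%:M, 0; split.
- exact: unitmx1.
- exact: eball_ellipse.
- by move=> x; apply: le_trans (N_le x).
- move=> A' c' _ sub_AN; rewrite /ellipse_area_cmp det1 normr1.
  apply: (halfturn_ellipse_det_le1 e0 e1 e2 i01 i12 i20 _ _ _ sub_AN).
  all: by move=> x Nx_le1; apply: le_trans Nx_le1; apply: contact_support_abs.
Qed.

End InscribedEllipses.

Section CircleParametrization.
Variable R : realType.
Implicit Types (u w : vec R) (s t x y : R).

Lemma lipschitz_continuous (f : R -> R) (k : R) : 0 <= k ->
  (forall s t, `|f s - f t| <= k * `|s - t|) -> continuous f.
Proof.
move=> k_ge0 f_lip x; apply/cvgrPdist_le => e e_gt0.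
have k1_gt0 : 0 < k + 1 by lra.
have ek_gt0 : 0 < e / (k + 1) by rewrite divr_gt0.
near=> t.
have : `|x - t| <= e / (k + 1) by near: t; exact: cvgr_dist_le cvg_id _ ek_gt0.
rewrite ler_pdivlMr // => xt_le; apply: le_trans (f_lip x t) _.
by have := normr_ge0 (x - t); nra.
Unshelve. all: by end_near.
Qed.

(* A rational parametrization of the unit circle; [-1, 1] is mapped onto the
   right half-circle. *)
Definition circ t : vec R := vec2 ((1 - t ^+ 2) / (1 + t ^+ 2)) (2 * t / (1 + t ^+ 2)).

Lemma circ_den_gt0 t : 0 < 1 + t ^+ 2.
Proof. by have := sqr_ge0 t; lra. Qed.

Lemma circ_den_neq0 t : 1 + t ^+ 2 != 0.
Proof. exact/lt0r_neq0/circ_den_gt0. Qed.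

Lemma circ_unit t : enorm (circ t) = 1.
Proof. by apply/enorm_eq1P; rewrite !coordE; field; exact: circ_den_neq0. Qed.

Lemma circ0 : circ 0 = vec2 1 0.
Proof. by rewrite /circ expr2 !(mul0r, mulr0, subr0, addr0, divr1). Qed.

Lemma circN t : circ (- t) = vec2 (circ t 0 0) (- circ t 0 1).
Proof. by apply: vec_eq; rewrite !coordE sqrrN // mulrN mulNr. Qed.

Lemma circN0 t : circ (- t) 0 0 = circ t 0 0.
Proof. by rewrite !coordE sqrrN. Qed.

Lemma circN1 t : circ (- t) 0 1 = - circ t 0 1.
Proof. by rewrite !coordE sqrrN mulrN mulNr. Qed.

Lemma circ_lipschitz s t : enorm (circ s - circ t) <= 2 * `|s - t|.
Proof.
have ds := circ_den_gt0 s; have dt := circ_den_gt0 t.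
rewrite -(ler_pXn2r (n := 2)) ?nnegrE ?enorm_ge0 ?mulr_ge0 ?normr_ge0 //.
have -> : enorm (circ s - circ t) ^+ 2 = 4 * (s - t) ^+ 2 / ((1 + s ^+ 2) * (1 + t ^+ 2)).
  by rewrite enorm_sqr !coordE; field; rewrite ?circ_den_neq0.
rewrite exprMn real_normK ?num_real // ler_pdivrMr ?mulr_gt0 //.
by have := sqr_ge0 (s - t); have := sqr_ge0 s; have := sqr_ge0 t; nra.
Qed.

Lemma circ_ge0 t : 0 <= t <= 1 -> 0 <= circ t 0 0 /\ 0 <= circ t 0 1.
Proof.
move=> /andP[t_ge0 t_le1]; have := circ_den_gt0 t.
by rewrite !coordE; split; apply: divr_ge0; nra.
Qed.

Lemma circ_x_antimono s t : 0 <= s -> s <= t -> circ t 0 0 <= circ s 0 0.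
Proof.
move=> s_ge0 st; have := circ_den_gt0 s; have := circ_den_gt0 t => dt ds.
by rewrite !coordE ler_pdivrMr // mulrAC ler_pdivlMr //; nra.
Qed.

Lemma circ_inv x y : x ^+ 2 + y ^+ 2 = 1 -> 0 <= x ->
  -1 <= y / (1 + x) <= 1 /\ circ (y / (1 + x)) = vec2 x y.
Proof.
move=> unit x_ge0; have x1_gt0 : 0 < 1 + x by lra.
have y2 : y ^+ 2 = (1 - x) * (1 + x) by lra.
split.
  rewrite -ler_norml normf_div (gtr0_norm x1_gt0) ler_pdivrMr // mul1r.
  rewrite -(ler_pXn2r (n := 2)) ?nnegrE ?normr_ge0 ?addr_ge0 //.
  by rewrite real_normK ?num_real // y2; nra.
have x1_neq0 : 1 + x != 0 by rewrite lt0r_neq0.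
have t2 : (y / (1 + x)) ^+ 2 = (1 - x) / (1 + x) by rewrite expr_div_n y2; field.
apply: vec_eq; rewrite !coordE t2; field.
all: by rewrite x1_neq0; apply: lt0r_neq0; lra.
Qed.

Lemma circle_cover u : enorm u = 1 ->
  exists2 t, -1 <= t <= 1 & circ t = u \/ circ t = - u.
Proof.
move=> u_unit.
have cover v : enorm v = 1 -> 0 <= v 0 0 -> exists2 t, -1 <= t <= 1 & circ t = v.
  move=> /enorm_eq1P unit v_ge0; have [t_in circ_t] := circ_inv unit v_ge0.
  by exists (v 0 1 / (1 + v 0 0)) => //; rewrite circ_t vec2E.
have [u_ge0|u_lt0] := leP 0 (u 0 0).
  by have [t t_in <-] := cover u u_unit u_ge0; exists t => //; left.
have Nu_ge0 : 0 <= (- u) 0 0 by rewrite mxE; lra.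
have [t t_in circ_t] := cover _ (etrans (enormN u) u_unit) Nu_ge0.
by exists t => //; right.
Qed.

Lemma circle_margin (f : vec R -> R) (L : R) : 0 <= L ->
  (forall u, f (- u) = f u) ->
  (forall u w, enorm u = 1 -> enorm w = 1 -> `|f u - f w| <= L * enorm (u - w)) ->
  (forall u, enorm u = 1 -> f u < 1) ->
  exists2 d, 0 < d & forall u, enorm u = 1 -> f u <= 1 - d.
Proof.
move=> L_ge0 f_even f_lip f_lt1.
have f_circ_lip s t : `|f (circ s) - f (circ t)| <= L * 2 * `|s - t|.
  apply: le_trans (f_lip _ _ (circ_unit s) (circ_unit t)) _.
  by rewrite -mulrA ler_wpM2l // circ_lipschitz.
have f_circ_cont := lipschitz_continuous (mulr_ge0 L_ge0 (ler0n _ 2)) f_circ_lip.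
have le11 : -1 <= 1 :> R by lra.
have [c c_in c_max] := EVT_max le11 (continuous_subspaceT f_circ_cont).
exists (1 - f (circ c)); first by have := f_lt1 _ (circ_unit c); lra.
move=> u /circle_cover[t t_in [<-|e]]; last rewrite -[u]opprK -e f_even.
all: by have := c_max t; rewrite !in_itv /= => /(_ t_in); lra.
Qed.

End CircleParametrization.

Section Perturbation.
Variable R : realType.
Implicit Types (u w x : vec R) (H : 'M[R]_2).

Lemma min0_lipschitz (a b : R) : `|Num.min a 0 - Num.min b 0| <= `|a - b|.
Proof.
have := ler_norm (a - b); have := ler_norm (b - a); rewrite distrC.
by case: (leP 0 a); case: (leP 0 b); rewrite ?subrr ?normr0 ?normr_ge0 // ler_norml;
  move=> *; apply/andP; split; lra.
Qed.

Lemma abs_coord0_le x : `|x 0 0| <= enorm x.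
Proof.
rewrite -(ler_pXn2r (n := 2)) ?nnegrE ?normr_ge0 ?enorm_ge0 //.
by rewrite real_normK ?num_real // enorm_sqr lerDl sqr_ge0.
Qed.

Lemma abs_coord1_le x : `|x 0 1| <= enorm x.
Proof.
rewrite -(ler_pXn2r (n := 2)) ?nnegrE ?normr_ge0 ?enorm_ge0 //.
by rewrite real_normK ?num_real // enorm_sqr lerDr sqr_ge0.
Qed.

Lemma enorm_le_abs_coords x : enorm x <= `|x 0 0| + `|x 0 1|.
Proof.
rewrite -(ler_pXn2r (n := 2)) ?nnegrE ?enorm_ge0 ?addr_ge0 ?normr_ge0 // enorm_sqr.
rewrite -(real_normK (num_real (x 0 0))) -(real_normK (num_real (x 0 1))).
by have := normr_ge0 (x 0 0); have := normr_ge0 (x 0 1); nra.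
Qed.

Lemma mulmx_bounded H : exists2 h, 0 <= h & forall x, enorm (x *m H) <= h * enorm x.
Proof.
exists (`|H 0 0| + `|H 0 1| + `|H 1 0| + `|H 1 1|); first by rewrite !addr_ge0.
move=> x; apply: le_trans (enorm_le_abs_coords _) _; rewrite !coordE.
have := abs_coord0_le x; have := abs_coord1_le x.
have := ler_normD (x 0 0 * H 0 0) (x 0 1 * H 1 0).
have := ler_normD (x 0 0 * H 0 1) (x 0 1 * H 1 1).
rewrite !normrM.
have := normr_ge0 (H 0 0); have := normr_ge0 (H 0 1); have := normr_ge0 (H 1 0).
have := normr_ge0 (H 1 1); nra.
Qed.

Definition qform H u := inner (u *m H) u.

Lemma qformN H u : qform H (- u) = qform H u.
Proof. by rewrite /qform mulNmx innerNl innerNr opprK. Qed.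

Lemma qform_lipschitz H (h : R) u w : 0 <= h ->
  (forall x, enorm (x *m H) <= h * enorm x) -> enorm u = 1 -> enorm w = 1 ->
  `|qform H u - qform H w| <= 2 * h * enorm (u - w).
Proof.
move=> h_ge0 mulH_le u_unit w_unit.
have -> : qform H u - qform H w = inner ((u - w) *m H) u + inner (w *m H) (u - w).
  by rewrite /qform !innerE !coordE; ring.
apply: le_trans (ler_normD _ _) _.
have := inner_le ((u - w) *m H) u; have := inner_le (w *m H) (u - w).
have := mulH_le (u - w); have := mulH_le w; rewrite u_unit w_unit.
by have := enorm_ge0 (u - w); have := enorm_ge0 (w *m H); nra.
Qed.

Lemma det_perturb H (e : R) :
  \det (1%:M + e *: H) = 1 + e * (H 0 0 + H 1 1) + e ^+ 2 * \det H.
Proof. by rewrite !det_mx2 !mxE /=; ring. Qed.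

Lemma det_perturb_gt1 H (e : R) : 0 < e ->
  e * (`|\det H| + 1) <= H 0 0 + H 1 1 -> 1 < \det (1%:M + e *: H).
Proof.
move=> e_gt0 e_small; rewrite det_perturb.
have : - `|\det H| <= \det H by rewrite lerNl -normrN ler_norm.
by have := mulr_gt0 e_gt0 e_gt0; nra.
Qed.

Variable N : vec R -> R.
Hypothesis normN : is_norm N.
Hypothesis N_le_enorm : forall x, N x <= enorm x.

Lemma ellipse_sub_nball A :
  (forall w, enorm w = 1 -> N (w *m A) <= 1) -> subset_pred (ellipse_set A 0) (nball N).
Proof.
move=> unit_le1 _ [u u_le1 ->]; rewrite addr0 /nball.
have [->|u_neq0] := eqVneq u 0; first by rewrite mul0mx is_norm0 ?ler01.
set r := enorm u.
have r_gt0 : 0 < r.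
  by rewrite lt0r enorm_ge0 andbT; apply: contraNneq u_neq0 => /enorm_eq0 ->.
have w_unit : enorm (r^-1 *: u) = 1.
  by rewrite enormZ ger0_norm ?invr_ge0 ?ltW // mulVf ?lt0r_neq0.
rewrite -[u](scalerKV (lt0r_neq0 r_gt0)) -scalemxAl is_normZ // gtr0_norm //.
have := unit_le1 _ w_unit; have := is_norm_ge0 normN ((r^-1 *: u) *m A).
by have : r <= 1 := u_le1; nra.
Qed.

Section ContactMargin.
Variables (H : 'M[R]_2) (h eta : R).
Hypothesis h_ge0 : 0 <= h.
Hypothesis mulH_le : forall x, enorm (x *m H) <= h * enorm x.
Hypothesis eta_gt0 : 0 < eta.
Hypothesis contact_neg : forall u, enorm u = 1 -> N u = 1 -> qform H u <= - (2 * eta).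

(* At contact points the penalty [min (qform H u + eta) 0] is at most [- eta];
   it vanishes wherever [qform H u >= - eta], where u (I + e H) may leave the
   Euclidean disc. *)
Lemma contact_margin : exists2 d, 0 < d &
  forall u, enorm u = 1 -> N u + Num.min (qform H u + eta) 0 <= 1 - d.
Proof.
apply: (circle_margin (L := 1 + 2 * h)).
- by have := h_ge0; lra.
- by move=> u; rewrite is_normN // qformN.
- move=> u w u_unit w_unit.
  have := is_norm_lipschitz normN N_le_enorm u w.
  have := min0_lipschitz (qform H u + eta) (qform H w + eta).
  have := qform_lipschitz h_ge0 mulH_le u_unit w_unit.
  have := ler_normD (N u - N w)
    (Num.min (qform H u + eta) 0 - Num.min (qform H w + eta) 0).
  have -> : qform H u + eta - (qform H w + eta) = qform H u - qform H w by ring.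
  have -> : N u + Num.min (qform H u + eta) 0 - (N w + Num.min (qform H w + eta) 0) =
    (N u - N w) + (Num.min (qform H u + eta) 0 - Num.min (qform H w + eta) 0) by ring.
  by lra.
- move=> u u_unit; have : Num.min (qform H u + eta) 0 <= 0 by rewrite ge_min lexx orbT.
  have [Nu_lt1|Nu_ge1] := ltP (N u) 1; first lra.
  have Nu1 : N u = 1 by apply: le_anti; rewrite Nu_ge1 -u_unit N_le_enorm.
  have : Num.min (qform H u + eta) 0 <= qform H u + eta by rewrite ge_min lexx.
  by have := contact_neg u_unit Nu1; have := eta_gt0; rewrite Nu1; lra.
Qed.

Lemma perturbed_unit_le1 (d e : R) w : 0 < e ->
  e * (h + 1) <= d -> e * (h ^+ 2 + 1) <= 2 * eta ->
  enorm w = 1 -> N w + Num.min (qform H w + eta) 0 <= 1 - d ->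
  N (w + e *: (w *m H)) <= 1.
Proof.
move=> e_gt0 e_d e_eta w_unit margin.
have wH_le : enorm (w *m H) <= h by have := mulH_le w; rewrite w_unit mulr1.
have [q_ge|q_lt] := leP (- eta) (qform H w).
  have min0 : Num.min (qform H w + eta) 0 = 0 by apply/min_r; lra.
  rewrite min0 addr0 in margin.
  apply: le_trans (is_normD normN _ _) _; rewrite is_normZ // gtr0_norm //.
  have : e * N (w *m H) <= e * h.
    by apply: (ler_wpM2l (ltW e_gt0)); apply: le_trans (N_le_enorm _) wH_le.
  by rewrite mulrDr mulr1 in e_d; have := ltW e_gt0; lra.
apply: le_trans (N_le_enorm _) _.
rewrite -(ler_pXn2r (n := 2)) ?nnegrE ?enorm_ge0 // expr1n.
have -> : enorm (w + e *: (w *m H)) ^+ 2 =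
    enorm w ^+ 2 + 2 * e * qform H w + e ^+ 2 * enorm (w *m H) ^+ 2.
  by rewrite !enorm_sqr /qform innerE !coordE; ring.
rewrite w_unit expr1n.
have : enorm (w *m H) ^+ 2 <= h ^+ 2 by have := enorm_ge0 (w *m H); nra.
by nra.
Qed.

Lemma larger_inscribed_ellipse : 0 < H 0 0 + H 1 1 ->
  exists A, [/\ A \in unitmx, subset_pred (ellipse_set A 0) (nball N) & 1 < `|\det A|].
Proof.
move=> tr_gt0; have [d d_gt0 margin] := contact_margin.
have := h_ge0; have := eta_gt0 => ? ?.
have h1_gt0 : 0 < h + 1 by lra.
have h21_gt0 : 0 < h ^+ 2 + 1 by have := sqr_ge0 h; lra.
have dH1_gt0 : 0 < `|\det H| + 1 by have := normr_ge0 (\det H); lra.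
pose e := Num.min (Num.min (d / (h + 1)) (2 * eta / (h ^+ 2 + 1)))
  ((H 0 0 + H 1 1) / (`|\det H| + 1)).
have e_gt0 : 0 < e by rewrite !lt_min !divr_gt0 //; lra.
have e_d : e * (h + 1) <= d.
  by rewrite -ler_pdivlMr // /e !ge_min lexx.
have e_eta : e * (h ^+ 2 + 1) <= 2 * eta.
  by rewrite -ler_pdivlMr // /e !ge_min lexx orbT.
have e_tr : e * (`|\det H| + 1) <= H 0 0 + H 1 1.
  by rewrite -ler_pdivlMr // /e !ge_min lexx orbT.
have det_gt1 := det_perturb_gt1 e_gt0 e_tr.
exists (1%:M + e *: H); split.
- by rewrite unitmxE unitfE lt0r_neq0 //; lra.
- apply: ellipse_sub_nball => w w_unit.
  rewrite mulmxDr mulmx1 -scalemxAr.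
  exact: perturbed_unit_le1 e_gt0 e_d e_eta w_unit (margin w w_unit).
- by rewrite gtr0_norm //; lra.
Qed.

End ContactMargin.
End Perturbation.

Section Frame.
Variable R : realType.
Implicit Types (u v x y : vec R).

Definition perp v : vec R := vec2 (- v 0 1) (v 0 0).

Definition frame v x : vec R := x 0 0 *: v + x 0 1 *: perp v.

Lemma frameB v x y : frame v x - frame v y = frame v (x - y).
Proof. by apply: vec_eq; rewrite !coordE; ring. Qed.

Lemma frame_e1 v : frame v (vec2 1 0) = v.
Proof. by rewrite /frame !coordE scale1r scale0r addr0. Qed.

Variable v : vec R.
Hypothesis v_unit : enorm v = 1.

Lemma frame_inner x y : inner (frame v x) (frame v y) = inner x y.
Proof.
have /enorm_eq1P v2 := v_unit.
transitivity (inner x y * (v 0 0 ^+ 2 + v 0 1 ^+ 2)); last by rewrite v2 mulr1.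
by rewrite !innerE !coordE; ring.
Qed.

Lemma frame_enorm x : enorm (frame v x) = enorm x.
Proof. by rewrite /enorm frame_inner. Qed.

Lemma frame_coords u : frame v (vec2 (inner u v) (inner u (perp v))) = u.
Proof.
have /enorm_eq1P v2 := v_unit.
apply: vec_eq; rewrite !innerE !coordE.
- transitivity (u 0 0 * (v 0 0 ^+ 2 + v 0 1 ^+ 2)); last by rewrite v2 mulr1.
  by ring.
- transitivity (u 0 1 * (v 0 0 ^+ 2 + v 0 1 ^+ 2)); last by rewrite v2 mulr1.
  by ring.
Qed.

End Frame.

Section ArcProduct.
Variable R : realFieldType.

Lemma arc_product_ge (x y xp yp xm ym : R) :
  x ^+ 2 + y ^+ 2 = 1 -> xp ^+ 2 + yp ^+ 2 = 1 -> xm ^+ 2 + ym ^+ 2 = 1 ->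
  0 <= x -> 0 <= xp -> 0 <= yp -> 0 <= xm -> 0 <= ym ->
  (0 <= y /\ xp <= x) \/ (y < 0 /\ xm <= x) ->
  xp * xm - yp * ym <= (x * xp + y * yp) * (x * xm - y * ym).
Proof.
move=> unit unitp unitm x_ge0 xp_ge0 yp_ge0 xm_ge0 ym_ge0 y_cases.
have -> : (x * xp + y * yp) * (x * xm - y * ym) =
    (xp * xm - yp * ym) + (x * yp - y * xp) * (x * ym + y * xm).
  transitivity ((x * xp + y * yp) * (x * xm - y * ym)
    + (1 - (x ^+ 2 + y ^+ 2)) * (xp * xm - yp * ym)); last by ring.
  by rewrite unit subrr mul0r addr0.
rewrite lerDl; case: y_cases => [[y_ge0 xp_le]|[y_lt0 xm_le]].
- have : y <= yp by nra.
  by move=> y_le; apply: mulr_ge0; nra.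
- have : - y <= ym by nra.
  by move=> y_le; apply: mulr_ge0; nra.
Qed.

End ArcProduct.

Section ExtremalContacts.
Variable R : realType.
Implicit Types (u v w x : vec R).
Variable N : vec R -> R.
Hypothesis normN : is_norm N.
Hypothesis N_le_enorm : forall x, N x <= enorm x.

Lemma last_contact (g : R -> vec R) (k : R) : 0 <= k ->
  (forall t, enorm (g t) = 1) -> (forall s t, enorm (g s - g t) <= k * `|s - t|) ->
  N (g 0) = 1 ->
  exists s : R, [/\ 0 <= s <= 1, N (g s) = 1 &
    forall t, 0 <= t <= 1 -> N (g t) = 1 -> t <= s].
Proof.
move=> k_ge0 g_unit g_lip Ng0.
pose Z : set R := fun t => 0 <= t <= 1 /\ N (g t) = 1.
have Z0 : Z 0 by split; rewrite ?lexx ?ler01.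
have Z_sup : has_sup Z by split; [exists 0 | exists 1 => t [/andP[_ ?] _]].
have Z_ub := sup_upper_bound Z_sup.
have sup_ge0 : 0 <= sup Z by exact: Z_ub.
have sup_le1 : sup Z <= 1 by apply: ge_sup; [exists 0 | move=> t [/andP[_ ?] _]].
exists (sup Z); split => [|| t t01 Ngt]; first by rewrite sup_ge0 sup_le1.
  apply: le_anti; rewrite (le_trans (N_le_enorm _)) ?g_unit //=.
  rewrite leNgt; apply/negP => Ngs_lt1.
  have [eps eps_gt0 eps_k] : exists2 eps, 0 < eps & eps * k + eps = 1 - N (g (sup Z)).
    have k1_gt0 : 0 < k + 1 by lra.
    exists ((1 - N (g (sup Z))) / (k + 1)); first by rewrite divr_gt0 //; lra.
    by rewrite -[X in _ + X]mulr1 -mulrDr divfK ?lt0r_neq0.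
  have [t [/andP[t_ge0 t_le1] Ngt] t_gt] := sup_adherent eps_gt0 Z_sup.
  have t_le : t <= sup Z by apply: Z_ub; split; rewrite ?t_ge0.
  have := is_norm_lipschitz normN N_le_enorm (g t) (g (sup Z)).
  have := g_lip t (sup Z); rewrite Ngt distrC ger0_norm ?subr_ge0 //.
  have : (sup Z - t) * k <= eps * k by apply: ler_wpM2r => //; lra.
  by rewrite ler_norml mulrC; lra.
by apply: Z_ub; split.
Qed.

Variable v0 : vec R.
Hypothesis v0_unit : enorm v0 = 1.
Hypothesis Nv0 : N v0 = 1.

(* As t runs over [0, 1], [arc t] and [arc (- t)] run over the two
   quarter-circles starting at v0. *)
Let arc t := frame v0 (circ t).

Lemma extremal_contacts : exists up um,
  [/\ enorm up = 1 /\ N up = 1, enorm um = 1 /\ N um = 1,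
      0 <= inner v0 up, 0 <= inner v0 um &
      forall u, enorm u = 1 -> N u = 1 -> 0 <= inner u v0 ->
        inner up um <= inner u up * inner u um].
Proof.
have arc_unit t : enorm (arc t) = 1 by rewrite frame_enorm ?circ_unit.
have arc_lip s t : enorm (arc s - arc t) <= 2 * `|s - t|.
  by rewrite frameB frame_enorm ?circ_lipschitz.
have arcN_lip s t : enorm (arc (- s) - arc (- t)) <= 2 * `|s - t|.
  by apply: le_trans (arc_lip _ _) _; rewrite opprK addrC distrC.
have arc0 : N (arc 0) = 1 by rewrite /arc circ0 frame_e1.
have arcN0 : N (arc (- 0)) = 1 by rewrite oppr0.
have [sp [sp01 Nup sp_max]] := last_contact (ler0n _ 2) arc_unit arc_lip arc0.
have [sm [sm01 Num sm_max]] :=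
  last_contact (g := fun t => arc (- t)) (ler0n _ 2) (fun t => arc_unit _) arcN_lip arcN0.
have [xp_ge0 yp_ge0] := circ_ge0 sp01; have [xm_ge0 ym_ge0] := circ_ge0 sm01.
have inner_arc a b t :
    inner (frame v0 (vec2 a b)) (arc t) = a * circ t 0 0 + b * circ t 0 1.
  by rewrite frame_inner // innerE vec2_0 vec2_1.
have inner_arcs s t :
    inner (arc s) (arc t) = circ s 0 0 * circ t 0 0 + circ s 0 1 * circ t 0 1.
  by rewrite frame_inner // innerE.
exists (arc sp), (arc (- sm)); split => //.
- by rewrite -{1}(frame_e1 v0) inner_arc mul1r mul0r addr0.
- by rewrite -{1}(frame_e1 v0) inner_arc mul1r mul0r addr0 circN0.
move=> u u_unit Nu X_ge0; rewrite -(frame_coords v0_unit u) in u_unit Nu *.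
set X := inner u v0 in X_ge0 u_unit Nu *; set Y := inner u (perp v0) in u_unit Nu *.
have unit : X ^+ 2 + Y ^+ 2 = 1.
  by move: u_unit; rewrite frame_enorm // => /enorm_eq1P; rewrite vec2_0 vec2_1.
have circ_unit2 t : circ t 0 0 ^+ 2 + circ t 0 1 ^+ 2 = 1 by apply/enorm_eq1P/circ_unit.
rewrite inner_arcs !inner_arc circN0 circN1 !mulrN.
apply: arc_product_ge; rewrite ?circ_unit2 //.
have [Y_ge0|Y_lt0] := leP 0 Y; [left | right]; split => //.
- have [t_in circ_t] := circ_inv unit X_ge0.
  have t_ge0 : 0 <= Y / (1 + X) by rewrite divr_ge0 //; lra.
  have t01 : 0 <= Y / (1 + X) <= 1 by rewrite t_ge0; case/andP: t_in.
  have Nt : N (arc (Y / (1 + X))) = 1 by rewrite /arc circ_t.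
  by have := circ_x_antimono t_ge0 (sp_max _ t01 Nt); rewrite circ_t vec2_0.
- have unitN : X ^+ 2 + (- Y) ^+ 2 = 1 by rewrite sqrrN.
  have [t_in circ_t] := circ_inv unitN X_ge0.
  have t_ge0 : 0 <= - Y / (1 + X) by rewrite divr_ge0 //; lra.
  have t01 : 0 <= - Y / (1 + X) <= 1 by rewrite t_ge0; case/andP: t_in.
  have Nt : N (arc (- (- Y / (1 + X)))) = 1.
    by rewrite /arc circN circ_t vec2_0 vec2_1 opprK.
  by have := circ_x_antimono t_ge0 (sm_max _ t01 Nt); rewrite circ_t vec2_0.
Qed.

End ExtremalContacts.

Section ContactDirections.
Variable R : realType.
Implicit Types (u v x : vec R).

(* [3 c / 4] lies strictly between [c / 2], which makes the trace positive,
   and [c], a lower bound for [inner u up * inner u um] at contact points. *)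
Definition hmat (c : R) (up um : vec R) : 'M[R]_2 :=
  \matrix_(i, j) (3 * c / 4 * (i == j)%:R - (up 0 i * um 0 j + um 0 i * up 0 j) / 2).

Lemma qform_hmat c up um u :
  qform (hmat c up um) u = 3 * c / 4 * enorm u ^+ 2 - inner u up * inner u um.
Proof. by rewrite /qform enorm_sqr !innerE !coordE /=; field. Qed.

Lemma trace_hmat c up um :
  hmat c up um 0 0 + hmat c up um 1 1 = 3 * c / 2 - inner up um.
Proof. by rewrite innerE !mxE /=; field. Qed.

Lemma halfturn_contacts_or_direction (N : vec R -> R) : is_norm N ->
  (forall x, N x <= enorm x) ->
  (exists v0 v1 v2 : vec R,
    [/\ enorm v0 = 1 /\ N v0 = 1,
        enorm v1 = 1 /\ N v1 = 1,
        enorm v2 = 1 /\ N v2 = 1 &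
        [/\ 0 <= inner v0 v1, 0 <= inner v1 v2 & 0 <= inner v2 (- v0)]]) \/
  exists (H : 'M[R]_2) (eta : R), [/\ 0 < eta, 0 < H 0 0 + H 1 1 &
    forall u, enorm u = 1 -> N u = 1 -> qform H u <= - (2 * eta)].
Proof.
move=> normN N_le.
have [[v0 [v0_unit Nv0]]|no_contact] := pselect (exists v, enorm v = 1 /\ N v = 1);
  last first.
  right; exists 1%:M, 1; split => //; first by rewrite !mxE /=; lra.
  by move=> u u_unit Nu; case: no_contact; exists u.
have [up [um [[up_unit Nup] [um_unit Num] v0up v0um up_um_le]]] :=
  extremal_contacts normN N_le v0_unit Nv0.
have [c_le0|c_gt0] := leP (inner up um) 0.
  left; exists v0, up, (- um); split; rewrite ?enormN ?(is_normN normN) //.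
  split => //; first by rewrite innerNr oppr_ge0.
  by rewrite innerNl innerNr opprK innerC.
right; exists (hmat (inner up um) up um), (inner up um / 8); split.
- by rewrite divr_gt0.
- by rewrite trace_hmat; lra.
move=> u u_unit Nu; rewrite qform_hmat u_unit expr1n mulr1.
suff : inner up um <= inner u up * inner u um by lra.
have [|X_lt0] := leP 0 (inner u v0); first exact: up_um_le.
rewrite -mulrNN -!innerNl; apply: up_um_le; rewrite ?enormN ?(is_normN normN) //.
by rewrite innerNl; lra.
Qed.

End ContactDirections.

Theorem theorem2p1 (R : realType) (N : vec R -> R) :
  is_norm N ->
  (forall x : vec R, N x <= enorm x) ->
  is_John_ellipse (nball N) (@eball R) <->
  exists v0 v1 v2 : vec R,
    [/\ enorm v0 = 1 /\ N v0 = 1,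
        enorm v1 = 1 /\ N v1 = 1,
        enorm v2 = 1 /\ N v2 = 1 &
        [/\ 0 <= inner v0 v1, 0 <= inner v1 v2 & 0 <= inner v2 (- v0)]].
Proof.
move=> normN N_le; split => [[A0 [c0 [_ E_ell _ A0_max]]] |].
  have [//|[H [eta [eta_gt0 tr_gt0 contact_neg]]]] :=
    halfturn_contacts_or_direction normN N_le.
  have [h h_ge0 mulH_le] := mulmx_bounded H.
  have [A [A_unit A_sub det_gt1]] :=
    larger_inscribed_ellipse normN N_le h_ge0 mulH_le eta_gt0 contact_neg tr_gt0.
  have A0_le1 : `|\det A0| <= 1.
    by apply: (@eball_ellipse_det_le1 _ A0 c0) => x /E_ell.
  by have := A0_max A 0 A_unit A_sub; rewrite /ellipse_area_cmp; lra.
move=> [v0 [v1 [v2 [[e0 n0] [e1 n1] [e2 n2] [i01 i12 i20]]]]].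
exact: contacts_John normN N_le e0 n0 e1 n1 e2 n2 i01 i12 i20.
Qed.
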